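(* Let $f:[0,1]\times\mathbb{R}^4\to\mathbb{R}$ be continuous, and suppose there exists a constant $M>0$ such that $|f(x,u,y,v,z)|\le \frac{M}{2}$ for all $(x,u,y,v,z)\in\mathcal{D}_M$, where $$\mathcal{D}_M=\Big\{(x,u,y,v,z)\;:\;0\le x\le 1,\ |u|\le \tfrac{M}{384},\ |y|\le \tfrac{M}{72\sqrt3},\ |v|\le M,\ |z|\le M\Big\}.$$ Assume further that there exist constants $K_1,K_2,K_3,K_4\ge 0$ such that $$|f(x,u_2,y_2,v_2,z_2)-f(x,u_1,y_1,v_1,z_1)|\le K_1|u_2-u_1|+K_2|y_2-y_1|+K_3|v_2-v_1|+K_4|z_2-z_1|$$ for all $(x,u_i,y_i,v_i,z_i)\in\mathcal{D}_M$ $(i=1,2)$, and that $$q=\frac{K_1}{384}+\frac{K_2}{72\sqrt3}+K_3+K_4<\frac12 .$$ Then the boundary value problem $$u^{(4)}(x)=f(x,u(x),u'(x),u''(x),u'''(x)),\quad 0<x<1,\qquad u(0)=u(1)=0,\quad u'(0)=u'(1)=0,$$ has a unique solution $u$, and $$\|u\|_\infty\le \frac{M}{384},\quad \|u'\|_\infty\le \frac{M}{72\sqrt3},\quad \|u''\|_\infty\le M,\quad \|u'''\|_\infty\le M.$$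
   Context: A solution means a function $u\in C^4[0,1]$ satisfying the differential equation on $(0,1)$ and the boundary conditions. $\|g\|_\infty=\max_{x\in[0,1]}|g(x)|$. *)

From Stdlib Require Import Reals.
Open Scope R_scope.

Definition I01 (x : R) : Prop := 0 <= x <= 1.

Definition has_deriv_I01 (g : R -> R) (x l : R) : Prop :=
  forall eps, 0 < eps -> exists delta, 0 < delta /\
    forall y, I01 y -> y <> x -> Rabs (y - x) < delta ->
      Rabs ((g y - g x) / (y - x) - l) < eps.

Definition cont_I01 (g : R -> R) (x : R) : Prop :=
  forall eps, 0 < eps -> exists delta, 0 < delta /\
    forall y, I01 y -> Rabs (y - x) < delta -> Rabs (g y - g x) < eps.

Definition C4_I01 (u u1 u2 u3 u4 : R -> R) : Prop :=
  forall x, I01 x ->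
    has_deriv_I01 u x (u1 x) /\ has_deriv_I01 u1 x (u2 x) /\
    has_deriv_I01 u2 x (u3 x) /\ has_deriv_I01 u3 x (u4 x) /\
    cont_I01 u4 x.

Definition cont_f (f : R -> R -> R -> R -> R -> R) : Prop :=
  forall x u y v z, I01 x -> forall eps, 0 < eps -> exists delta, 0 < delta /\
    forall x' u' y' v' z', I01 x' ->
      Rabs (x' - x) < delta -> Rabs (u' - u) < delta -> Rabs (y' - y) < delta ->
      Rabs (v' - v) < delta -> Rabs (z' - z) < delta ->
      Rabs (f x' u' y' v' z' - f x u y v z) < eps.

Definition DM (M x u y v z : R) : Prop :=
  0 <= x <= 1 /\ Rabs u <= M / 384 /\ Rabs y <= M / (72 * sqrt 3) /\
  Rabs v <= M /\ Rabs z <= M.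

Definition is_solution (f : R -> R -> R -> R -> R -> R)
    (u u1 u2 u3 u4 : R -> R) : Prop :=
  C4_I01 u u1 u2 u3 u4 /\
  (forall x, 0 < x < 1 -> u4 x = f x (u x) (u1 x) (u2 x) (u3 x)) /\
  u 0 = 0 /\ u 1 = 0 /\ u1 0 = 0 /\ u1 1 = 0.

Definition sol_bounds (M : R) (u u1 u2 u3 : R -> R) : Prop :=
  forall x, I01 x ->
    Rabs (u x) <= M / 384 /\ Rabs (u1 x) <= M / (72 * sqrt 3) /\
    Rabs (u2 x) <= M /\ Rabs (u3 x) <= M.

From Stdlib Require Import Reals Lra Lia Psatz FunctionalExtensionality.
From Coquelicot Require Import Coquelicot.
Open Scope R_scope.

(* The problem is recast as a fixed-point equation for phi = u''''.  For
   continuous phi, U0 phi x = int_0^1 G(x,t) phi(t) dt, with G the Green's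
   function of u'''' under u(0) = u'(0) = u(1) = u'(1) = 0, solves u'''' = phi,
   and bounds on int_0^1 |d^j G/dx^j (x,t)| dt give |U_j phi| <= c_j sup |phi|
   with (c_0, c_1, c_2, c_3) = (1/384, 1/64, 2, 1).  Since 72 sqrt 3 <= 128,
   sup |phi| <= M/2 keeps (x, U0 phi, ..., U3 phi) inside D_M, so
   T phi = f(x, U0 phi, ..., U3 phi) maps the ball of radius M/2 of continuous
   functions into itself, and by linearity of the U_j it is a contraction with
   constant K1/384 + K2/64 + 2 K3 + K4 <= 2 q < 1.  Its fixed point is the
   fourth derivative of the solution.  Conversely, the fourth derivative of any
   solution obeying the bounds lies in that ball and is fixed by T, because the
   homogeneous clamped problem has only the zero solution. *)

(** * Continuity and derivatives relative to [0,1] *)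

Lemma continuous_epsilon_delta (g : R -> R) (x : R) :
  continuous g x <->
  forall eps, 0 < eps -> exists delta, 0 < delta /\
    forall y, Rabs (y - x) < delta -> Rabs (g y - g x) < eps.
Proof.
  transitivity (continuity_pt g x); [symmetry; apply continuity_pt_filterlim |].
  rewrite continuity_pt_locally. split.
  - intros H eps Heps. destruct (H (mkposreal eps Heps)) as [delta Hdelta].
    exists delta. split; [apply cond_pos | exact Hdelta].
  - intros H eps. destruct (H eps (cond_pos eps)) as [delta [Hdelta0 Hdelta]].
    exists (mkposreal delta Hdelta0). exact Hdelta.
Qed.

Lemma continuous_cont_I01 (g : R -> R) (x : R) : continuous g x -> cont_I01 g x.
Proof.
  intros Hg eps Heps. destruct (proj1 (continuous_epsilon_delta g x) Hg eps Heps)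
    as [delta [Hdelta0 Hdelta]].
  exists delta. split; auto.
Qed.

Definition clamp01 (x : R) : R := Rmax 0 (Rmin 1 x).

Lemma clamp01_I01 (x : R) : I01 (clamp01 x).
Proof. unfold clamp01, I01, Rmax, Rmin. repeat destruct Rle_dec; lra. Qed.

Lemma clamp01_id (x : R) : I01 x -> clamp01 x = x.
Proof. unfold clamp01, I01, Rmax, Rmin. repeat destruct Rle_dec; lra. Qed.

Lemma clamp01_dist (x y : R) : Rabs (clamp01 y - clamp01 x) <= Rabs (y - x).
Proof.
  unfold clamp01, Rmax, Rmin.
  repeat destruct Rle_dec; unfold Rabs; repeat destruct Rcase_abs; lra.
Qed.

Lemma continuous_clamp01 (g : R -> R) :
  (forall x, I01 x -> cont_I01 g x) -> forall x, continuous (fun t => g (clamp01 t)) x.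
Proof.
  intros Hg x. apply continuous_epsilon_delta. intros eps Heps.
  destruct (Hg (clamp01 x) (clamp01_I01 x) eps Heps) as [delta [Hdelta0 Hdelta]].
  exists delta. split; auto. intros y Hy. apply Hdelta.
  - apply clamp01_I01.
  - eapply Rle_lt_trans; [apply clamp01_dist | exact Hy].
Qed.

Lemma is_derive_has_deriv_I01 (g : R -> R) (x l : R) :
  is_derive g x l -> has_deriv_I01 g x l.
Proof.
  intros Hg%is_derive_Reals eps Heps. destruct (Hg eps Heps) as [delta Hdelta].
  exists delta. split; [apply cond_pos |].
  intros y _ Hyx Hy. replace y with (x + (y - x)) at 1 by ring.
  apply Hdelta; [lra | exact Hy].
Qed.

Lemma has_deriv_I01_is_derive (g : R -> R) (x l : R) :
  0 < x < 1 -> has_deriv_I01 g x l -> is_derive g x l.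
Proof.
  intros Hx Hg. apply is_derive_Reals. intros eps Heps.
  destruct (Hg eps Heps) as [delta [Hdelta0 Hdelta]].
  assert (Hr : 0 < Rmin delta (Rmin x (1 - x))) by (repeat apply Rmin_pos; lra).
  exists (mkposreal _ Hr). intros h Hh0 Hh; simpl in Hh.
  pose proof (Rmin_l delta (Rmin x (1 - x))).
  pose proof (Rmin_r delta (Rmin x (1 - x))).
  pose proof (Rmin_l x (1 - x)). pose proof (Rmin_r x (1 - x)).
  pose proof (Rle_abs h). pose proof (Rle_abs (- h)). rewrite Rabs_Ropp in *.
  specialize (Hdelta (x + h)). replace (x + h - x) with h in Hdelta by ring.
  apply Hdelta; unfold I01; lra.
Qed.

Lemma has_deriv_I01_cont (g : R -> R) (x l : R) : has_deriv_I01 g x l -> cont_I01 g x.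
Proof.
  intros Hg eps Heps.
  destruct (Hg 1 Rlt_0_1) as [delta [Hdelta0 Hdelta]].
  set (k := Rabs l + 1). assert (Hk : 0 < k) by (pose proof (Rabs_pos l); unfold k; lra).
  exists (Rmin delta (eps / k)). split; [apply Rmin_pos; auto; apply Rdiv_lt_0_compat; auto |].
  intros y Iy Hy. pose proof (Rmin_l delta (eps / k)). pose proof (Rmin_r delta (eps / k)).
  destruct (Req_dec y x) as [-> | Hyx]; [rewrite Rminus_eq_0, Rabs_R0; lra |].
  assert (Hq : Rabs ((g y - g x) / (y - x)) <= k).
  { pose proof (Rabs_triang_inv ((g y - g x) / (y - x)) l).
    specialize (Hdelta y Iy Hyx ltac:(lra)). unfold k; lra. }
  replace (g y - g x) with ((g y - g x) / (y - x) * (y - x)) by (field; lra).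
  rewrite Rabs_mult.
  apply Rle_lt_trans with (k * Rabs (y - x)); [apply Rmult_le_compat_r; auto using Rabs_pos |].
  replace eps with (k * (eps / k)) by (field; lra).
  apply Rmult_lt_compat_l; lra.
Qed.

Lemma has_deriv_I01_minus (g h : R -> R) (x l m : R) :
  has_deriv_I01 g x l -> has_deriv_I01 h x m ->
  has_deriv_I01 (fun y => g y - h y) x (l - m).
Proof.
  intros Hg Hh eps Heps.
  destruct (Hg (eps / 2) ltac:(lra)) as [d1 [Hd1 K1]].
  destruct (Hh (eps / 2) ltac:(lra)) as [d2 [Hd2 K2]].
  exists (Rmin d1 d2). split; [apply Rmin_pos; auto |].
  intros y Iy Hyx Hy. pose proof (Rmin_l d1 d2). pose proof (Rmin_r d1 d2).
  specialize (K1 y Iy Hyx ltac:(lra)). specialize (K2 y Iy Hyx ltac:(lra)).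
  replace ((g y - h y - (g x - h x)) / (y - x) - (l - m))
    with (((g y - g x) / (y - x) - l) - ((h y - h x) / (y - x) - m)) by (field; lra).
  eapply Rle_lt_trans; [apply Rabs_triang |]. rewrite Rabs_Ropp. lra.
Qed.

Lemma has_deriv_I01_zero_const (g : R -> R) :
  (forall x, I01 x -> cont_I01 g x) ->
  (forall x, 0 < x < 1 -> has_deriv_I01 g x 0) ->
  forall x, I01 x -> g x = g 0.
Proof.
  intros Hc Hd x Hx. set (G := fun t => g (clamp01 t)).
  assert (HG : forall y, 0 < y < 1 -> is_derive G y 0).
  { intros y Hy. apply has_deriv_I01_is_derive; auto.
    intros eps Heps. destruct (Hd y Hy eps Heps) as [delta [Hdelta0 Hdelta]].
    exists delta. split; auto. intros z Iz Hzy Hz.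
    unfold G. rewrite !clamp01_id; auto. unfold I01; lra. }
  destruct (MVT_gen G 0 x (fun _ => 0)) as [c [_ Hmvt]].
  - intros y Hy. apply HG. destruct Hx.
    rewrite Rmin_left, Rmax_right in Hy by lra. lra.
  - intros y _. apply continuity_pt_filterlim, continuous_clamp01. exact Hc.
  - unfold G in Hmvt. rewrite !clamp01_id in Hmvt by (auto; unfold I01; lra). lra.
Qed.

Lemma has_deriv_I01_antiderivative (g g' F : R -> R) :
  (forall x, I01 x -> has_deriv_I01 g x (g' x)) ->
  (forall x, I01 x -> is_derive F x (g' x)) ->
  forall x, I01 x -> g x = F x + (g 0 - F 0).
Proof.
  intros Hg HF x Hx.
  assert (Hd : forall y, I01 y -> has_deriv_I01 (fun t => g t - F t) y (g' y - g' y)).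
  { intros y Hy. apply has_deriv_I01_minus; auto. apply is_derive_has_deriv_I01; auto. }
  enough (g x - F x = g 0 - F 0) by lra.
  apply (has_deriv_I01_zero_const (fun t => g t - F t)); auto.
  - intros y Hy. eapply has_deriv_I01_cont, Hd, Hy.
  - intros y Hy. replace 0 with (g' y - g' y) by ring. apply Hd. unfold I01; lra.
Qed.

Lemma clamped_homogeneous_zero (z z1 z2 z3 : R -> R) :
  (forall x, I01 x ->
     has_deriv_I01 z x (z1 x) /\ has_deriv_I01 z1 x (z2 x) /\
     has_deriv_I01 z2 x (z3 x) /\ cont_I01 z3 x) ->
  (forall x, 0 < x < 1 -> has_deriv_I01 z3 x 0) ->
  z 0 = 0 -> z 1 = 0 -> z1 0 = 0 -> z1 1 = 0 ->
  forall x, I01 x -> z x = 0 /\ z1 x = 0 /\ z2 x = 0 /\ z3 x = 0.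
Proof.
  intros Hz Hz3 Hz0 Hz1 Hz10 Hz11.
  assert (I0 : I01 0) by (unfold I01; lra). assert (I1 : I01 1) by (unfold I01; lra).
  set (a := z3 0). set (b := z2 0).
  assert (E3 : forall x, I01 x -> z3 x = a).
  { apply has_deriv_I01_zero_const; auto. apply Hz. }
  assert (E2 : forall x, I01 x -> z2 x = a * x + b).
  { intros x Hx. rewrite (has_deriv_I01_antiderivative z2 z3 (fun t => a * t)); auto.
    - unfold b; ring.
    - apply Hz.
    - intros y Hy. rewrite E3 by auto. auto_derive; auto; ring. }
  assert (E1 : forall x, I01 x -> z1 x = a * x ^ 2 / 2 + b * x).
  { intros x Hx.
    rewrite (has_deriv_I01_antiderivative z1 z2 (fun t => a * t ^ 2 / 2 + b * t)), Hz10; auto.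
    - field.
    - apply Hz.
    - intros y Hy. rewrite E2 by auto. auto_derive; auto; field. }
  assert (E0 : forall x, I01 x -> z x = a * x ^ 3 / 6 + b * x ^ 2 / 2).
  { intros x Hx.
    rewrite (has_deriv_I01_antiderivative z z1 (fun t => a * t ^ 3 / 6 + b * t ^ 2 / 2)), Hz0;
      auto.
    - field.
    - apply Hz.
    - intros y Hy. rewrite E1 by auto. auto_derive; auto; field. }
  assert (Ha : a = 0 /\ b = 0).
  { pose proof (E0 1 I1). pose proof (E1 1 I1). lra. }
  intros x Hx. rewrite E0, E1, E2, E3 by auto. destruct Ha as [-> ->]. lra.
Qed.

(** * The solution operator of u'''' = phi *)

Definition moment (k : nat) (phi : R -> R) (a b : R) : R :=
  RInt (fun t => t ^ k * phi t) a b.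

Definition c2 (phi : R -> R) : R :=
  moment 1 phi 0 1 - 2 * moment 2 phi 0 1 + moment 3 phi 0 1.
Definition c3 (phi : R -> R) : R :=
  moment 0 phi 0 1 - 3 * moment 2 phi 0 1 + 2 * moment 3 phi 0 1.

(* U0 phi x = int_0^x (x - t)^3 / 6 phi(t) dt + c2 phi x^2 / 2 - c3 phi x^3 / 6,
   with (x - t)^3 expanded so that differentiating only needs the fundamental
   theorem of calculus; c2 and c3 enforce U0 phi 1 = U1 phi 1 = 0. *)
Definition U0 (phi : R -> R) (x : R) : R :=
  (x ^ 3 * moment 0 phi 0 x - 3 * x ^ 2 * moment 1 phi 0 x
   + 3 * x * moment 2 phi 0 x - moment 3 phi 0 x) / 6
  + x ^ 2 / 2 * c2 phi - x ^ 3 / 6 * c3 phi.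
Definition U1 (phi : R -> R) (x : R) : R :=
  (x ^ 2 * moment 0 phi 0 x - 2 * x * moment 1 phi 0 x + moment 2 phi 0 x) / 2
  + x * c2 phi - x ^ 2 / 2 * c3 phi.
Definition U2 (phi : R -> R) (x : R) : R :=
  x * moment 0 phi 0 x - moment 1 phi 0 x + c2 phi - x * c3 phi.
Definition U3 (phi : R -> R) (x : R) : R :=
  moment 0 phi 0 x - c3 phi.

Lemma moment_point k phi a : moment k phi a a = 0.
Proof. unfold moment. rewrite RInt_point. reflexivity. Qed.

Lemma U0_at_0 phi : U0 phi 0 = 0.
Proof. unfold U0. rewrite !moment_point. field. Qed.
Lemma U1_at_0 phi : U1 phi 0 = 0.
Proof. unfold U1. rewrite !moment_point. field. Qed.
Lemma U0_at_1 phi : U0 phi 1 = 0.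
Proof. unfold U0, c2, c3. field. Qed.
Lemma U1_at_1 phi : U1 phi 1 = 0.
Proof. unfold U1, c2, c3. field. Qed.

Section Moments.

Variable phi : R -> R.
Hypothesis phi_cont : forall t, continuous phi t.

Lemma continuous_moment_integrand k t : continuous (fun s => s ^ k * phi s) t.
Proof.
  apply (continuous_mult (fun s => s ^ k) phi); auto.
  apply (ex_derive_continuous (V := R_NormedModule)). auto_derive. auto.
Qed.

Lemma is_RInt_moment k a b : is_RInt (fun t => t ^ k * phi t) a b (moment k phi a b).
Proof.
  apply (RInt_correct (V := R_CompleteNormedModule)).
  apply (ex_RInt_continuous (V := R_CompleteNormedModule)).
  intros; apply continuous_moment_integrand.
Qed.

Lemma moment_Chasles k x : moment k phi x 1 = moment k phi 0 1 - moment k phi 0 x.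
Proof.
  pose proof (is_RInt_unique _ _ _ _
    (is_RInt_Chasles _ _ _ _ _ _ (is_RInt_moment k 0 x) (is_RInt_moment k x 1))) as E.
  change (moment k phi 0 1 = moment k phi 0 x + moment k phi x 1) in E. lra.
Qed.

Lemma is_derive_moment k x : is_derive (moment k phi 0) x (x ^ k * phi x).
Proof.
  apply (is_derive_RInt (V := R_NormedModule) (fun t => t ^ k * phi t) (moment k phi 0) 0).
  - apply filter_forall. intros; apply is_RInt_moment.
  - apply continuous_moment_integrand.
Qed.

Lemma ex_derive_moment k x : ex_derive (moment k phi 0) x.
Proof. eexists. apply is_derive_moment. Qed.

Lemma Derive_moment k x : Derive (moment k phi 0) x = x ^ k * phi x.
Proof. apply is_derive_unique, is_derive_moment. Qed.

Ltac derive_by_moments :=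
  auto_derive; [repeat split; apply ex_derive_moment |];
  rewrite !Derive_moment; simpl.

Lemma is_derive_U0 x : is_derive (U0 phi) x (U1 phi x).
Proof. unfold U0. derive_by_moments. unfold U1. field. Qed.

Lemma is_derive_U1 x : is_derive (U1 phi) x (U2 phi x).
Proof. unfold U1. derive_by_moments. unfold U2. field. Qed.

Lemma is_derive_U2 x : is_derive (U2 phi) x (U3 phi x).
Proof. unfold U2. derive_by_moments. unfold U3. field. Qed.

Lemma is_derive_U3 x : is_derive (U3 phi) x (phi x).
Proof. unfold U3. derive_by_moments. field. Qed.

Lemma is_RInt_cubic_moment a b d0 d1 d2 d3 :
  is_RInt (fun t => (d0 + d1 * t + d2 * t ^ 2 + d3 * t ^ 3) * phi t) a b
    (d0 * moment 0 phi a b + d1 * moment 1 phi a b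
     + d2 * moment 2 phi a b + d3 * moment 3 phi a b).
Proof.
  pose proof (is_RInt_plus _ _ _ _ _ _
    (is_RInt_plus _ _ _ _ _ _
      (is_RInt_plus _ _ _ _ _ _ (is_RInt_scal _ _ _ d0 _ (is_RInt_moment 0 a b))
                                (is_RInt_scal _ _ _ d1 _ (is_RInt_moment 1 a b)))
      (is_RInt_scal _ _ _ d2 _ (is_RInt_moment 2 a b)))
    (is_RInt_scal _ _ _ d3 _ (is_RInt_moment 3 a b))) as H.
  eapply is_RInt_ext; [| exact H].
  intros t _. unfold plus, scal; simpl. unfold mult; simpl. ring.
Qed.

End Moments.

Section Linearity.

Variables phi psi : R -> R.
Hypothesis phi_cont : forall t, continuous phi t.
Hypothesis psi_cont : forall t, continuous psi t.

Lemma moment_minus k a b :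
  moment k (fun t => phi t - psi t) a b = moment k phi a b - moment k psi a b.
Proof.
  apply is_RInt_unique.
  eapply is_RInt_ext;
    [| exact (is_RInt_minus _ _ _ _ _ _ (is_RInt_moment phi phi_cont k a b)
                                        (is_RInt_moment psi psi_cont k a b))].
  intros t _. unfold minus, plus, opp; simpl. ring.
Qed.

Lemma U0_minus x : U0 (fun t => phi t - psi t) x = U0 phi x - U0 psi x.
Proof. unfold U0, c2, c3. rewrite !moment_minus. field. Qed.
Lemma U1_minus x : U1 (fun t => phi t - psi t) x = U1 phi x - U1 psi x.
Proof. unfold U1, c2, c3. rewrite !moment_minus. field. Qed.
Lemma U2_minus x : U2 (fun t => phi t - psi t) x = U2 phi x - U2 psi x.
Proof. unfold U2, c2, c3. rewrite !moment_minus. ring. Qed.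
Lemma U3_minus x : U3 (fun t => phi t - psi t) x = U3 phi x - U3 psi x.
Proof. unfold U3, c3. rewrite !moment_minus. ring. Qed.

End Linearity.

(** * Bounds from the Green's function *)

(* The Green's function is G(x,t) = A0 x t for t <= x and B0 x t for x <= t;
   Aj and Bj are the two branches of d^j G / dx^j. *)
Definition A0 (x t : R) : R := t ^ 2 * (1 - x) ^ 2 * (3 * x - t - 2 * t * x) / 6.
Definition B0 (x t : R) : R := x ^ 2 * (1 - t) ^ 2 * (3 * t - x - 2 * x * t) / 6.
Definition A1 (x t : R) : R := t ^ 2 * (1 - x) * (1 - 3 * x + 2 * t * x) / 2.
Definition B1 (x t : R) : R := x * (1 - t) ^ 2 * (2 * t - x - 2 * x * t) / 2.
Definition A2 (x t : R) : R := t ^ 2 * (3 * x - 2 * t * x + t - 2).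
Definition B2 (x t : R) : R := (1 - t) ^ 2 * (t - x - 2 * x * t).
Definition A3 (x t : R) : R := t ^ 2 * (3 - 2 * t).
Definition B3 (x t : R) : R := - (1 - 3 * t ^ 2 + 2 * t ^ 3).

Definition is_Green_integral (A B phi : R -> R) (x v : R) : Prop :=
  exists P Q, is_RInt (fun t => A t * phi t) 0 x P /\
              is_RInt (fun t => B t * phi t) x 1 Q /\ v = P + Q.

Lemma Green_integral_bound (A B alpha beta phi : R -> R) (x v a b c d : R) :
  0 <= x <= 1 -> is_Green_integral A B phi x v ->
  (forall t, 0 <= t <= 1 -> Rabs (phi t) <= d) ->
  (forall t, 0 <= t <= x -> Rabs (A t) <= alpha t) ->
  (forall t, x <= t <= 1 -> Rabs (B t) <= beta t) ->
  is_RInt alpha 0 x a -> is_RInt beta x 1 b -> a + b <= c ->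
  Rabs v <= c * d.
Proof.
  intros Hx [P [Q [HP [HQ ->]]]] Hphi HA HB Ha Hb Hc.
  assert (Hd : 0 <= d) by (pose proof (Hphi 0 ltac:(lra)); pose proof (Rabs_pos (phi 0)); lra).
  assert (HP' : Rabs P <= d * a).
  { apply (norm_RInt_le (fun t => A t * phi t) (fun t => d * alpha t) 0 x P (d * a));
      [lra | | exact HP | exact (is_RInt_scal _ _ _ d _ Ha)].
    intros t Ht. change (norm (A t * phi t)) with (Rabs (A t * phi t)).
    rewrite Rabs_mult, Rmult_comm. apply Rmult_le_compat; auto using Rabs_pos.
    apply Hphi; lra. }
  assert (HQ' : Rabs Q <= d * b).
  { apply (norm_RInt_le (fun t => B t * phi t) (fun t => d * beta t) x 1 Q (d * b));
      [lra | | exact HQ | exact (is_RInt_scal _ _ _ d _ Hb)].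
    intros t Ht. change (norm (B t * phi t)) with (Rabs (B t * phi t)).
    rewrite Rabs_mult, Rmult_comm. apply Rmult_le_compat; auto using Rabs_pos.
    apply Hphi; lra. }
  pose proof (Rabs_triang P Q).
  assert (d * (a + b) <= d * c) by (apply Rmult_le_compat_l; lra).
  lra.
Qed.

Lemma is_RInt_antiderivative (F f : R -> R) (a b : R) :
  (forall t, is_derive F t (f t)) -> (forall t, ex_derive f t) ->
  is_RInt f a b (F b - F a).
Proof.
  intros HF Hf. apply (is_RInt_derive (V := R_CompleteNormedModule)); auto.
  intros t _. apply (ex_derive_continuous (V := R_NormedModule)). auto.
Qed.

(* int_0^1 |dG/dx (x,t)| dt is at most 1/12 of the left-hand side at y = min x (1 - x). *)
Lemma U1_kernel_mass_le (y : R) : 0 <= y <= 1 / 2 ->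
  y * (1 - y) * (1 - 2 * y + y ^ 3 * (4 - 3 * y)) <= 3 / 16.
Proof.
  intros Hy.
  assert (0 <= y ^ 3 <= 1 / 8).
  { split; [apply pow_le; lra |].
    replace (1 / 8) with ((1 / 2) ^ 3) by field. apply pow_incr; lra. }
  assert (0 <= y * (1 - y) <= 1 / 4) by nra.
  assert (1 - 2 * y + y ^ 3 * (4 - 3 * y) <= 1) by nra.
  nra.
Qed.

Section Green.

Variable phi : R -> R.
Hypothesis phi_cont : forall t, continuous phi t.

Lemma is_Green_integral_cubic (A B : R -> R) x v a0 a1 a2 a3 b0 b1 b2 b3 :
  (forall t, A t = a0 + a1 * t + a2 * t ^ 2 + a3 * t ^ 3) ->
  (forall t, B t = b0 + b1 * t + b2 * t ^ 2 + b3 * t ^ 3) ->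
  v = a0 * moment 0 phi 0 x + a1 * moment 1 phi 0 x
      + a2 * moment 2 phi 0 x + a3 * moment 3 phi 0 x
      + b0 * moment 0 phi x 1 + b1 * moment 1 phi x 1
      + b2 * moment 2 phi x 1 + b3 * moment 3 phi x 1 ->
  is_Green_integral A B phi x v.
Proof.
  intros HA HB Hv. eexists; eexists; split; [| split].
  - eapply is_RInt_ext; [| apply (is_RInt_cubic_moment phi phi_cont 0 x a0 a1 a2 a3)].
    intros t _. rewrite HA. reflexivity.
  - eapply is_RInt_ext; [| apply (is_RInt_cubic_moment phi phi_cont x 1 b0 b1 b2 b3)].
    intros t _. rewrite HB. reflexivity.
  - rewrite Hv. ring.
Qed.

Lemma U0_Green x : is_Green_integral (A0 x) (B0 x) phi x (U0 phi x).
Proof.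
  apply (is_Green_integral_cubic _ _ x _ 0 0 (x / 2 - x ^ 2 + x ^ 3 / 2)
    (- 1 / 6 + x ^ 2 / 2 - x ^ 3 / 3) (- x ^ 3 / 6) (x ^ 2 / 2)
    (- x ^ 2 + x ^ 3 / 2) (x ^ 2 / 2 - x ^ 3 / 3));
    [intros; unfold A0; field | intros; unfold B0; field |].
  rewrite !(moment_Chasles phi phi_cont _ x). unfold U0, c2, c3. field.
Qed.

Lemma U1_Green x : is_Green_integral (A1 x) (B1 x) phi x (U1 phi x).
Proof.
  apply (is_Green_integral_cubic _ _ x _ 0 0 (1 / 2 - 2 * x + 3 * x ^ 2 / 2) (x - x ^ 2)
    (- x ^ 2 / 2) x (- 2 * x + 3 * x ^ 2 / 2) (x - x ^ 2));
    [intros; unfold A1; field | intros; unfold B1; field |].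
  rewrite !(moment_Chasles phi phi_cont _ x). unfold U1, c2, c3. field.
Qed.

Lemma U2_Green x : is_Green_integral (A2 x) (B2 x) phi x (U2 phi x).
Proof.
  apply (is_Green_integral_cubic _ _ x _ 0 0 (- 2 + 3 * x) (1 - 2 * x)
    (- x) 1 (- 2 + 3 * x) (1 - 2 * x));
    [intros; unfold A2; ring | intros; unfold B2; ring |].
  rewrite !(moment_Chasles phi phi_cont _ x). unfold U2, c2, c3. ring.
Qed.

Lemma U3_Green x : is_Green_integral (A3 x) (B3 x) phi x (U3 phi x).
Proof.
  apply (is_Green_integral_cubic _ _ x _ 0 0 3 (-2) (-1) 0 3 (-2));
    [intros; unfold A3; ring | intros; unfold B3; ring |].
  rewrite !(moment_Chasles phi phi_cont _ x). unfold U3, c3. ring.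
Qed.

Variable d : R.
Hypothesis phi_bound : forall t, 0 <= t <= 1 -> Rabs (phi t) <= d.

Lemma U0_bound x : 0 <= x <= 1 -> Rabs (U0 phi x) <= d / 384.
Proof.
  intros Hx. replace (d / 384) with (/ 384 * d) by field.
  eapply (Green_integral_bound (A0 x) (B0 x) (A0 x) (B0 x)); eauto using U0_Green.
  - intros t Ht. rewrite Rabs_pos_eq; [lra |]. unfold A0.
    assert (0 <= (x - t) + 2 * x * (1 - t)) by nra.
    assert (0 <= t ^ 2 * (1 - x) ^ 2) by (apply Rmult_le_pos; apply pow2_ge_0).
    nra.
  - intros t Ht. rewrite Rabs_pos_eq; [lra |]. unfold B0.
    assert (0 <= (t - x) + 2 * t * (1 - x)) by nra.
    assert (0 <= x ^ 2 * (1 - t) ^ 2) by (apply Rmult_le_pos; apply pow2_ge_0).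
    nra.
  - apply (is_RInt_antiderivative
      (fun t => (1 - x) ^ 2 / 6 * (x * t ^ 3 - (1 + 2 * x) * t ^ 4 / 4)));
      intros t; unfold A0; auto_derive; auto; field.
  - apply (is_RInt_antiderivative
      (fun t => - x ^ 2 / 6 * ((3 - 3 * x) * (1 - t) ^ 3 / 3 - (3 - 2 * x) * (1 - t) ^ 4 / 4)));
      intros t; unfold B0; auto_derive; auto; field.
  - match goal with |- ?s <= _ => replace s with ((x * (1 - x)) ^ 2 / 24) by field end.
    pose proof (pow2_ge_0 (x - 1 / 2)).
    assert (0 <= x * (1 - x) <= 1 / 4) by (split; nra).
    nra.
Qed.

Lemma U1_bound_left x : 0 <= x <= 1 / 2 -> Rabs (U1 phi x) <= d / 64.
Proof.
  intros Hx. replace (d / 64) with (/ 64 * d) by field.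
  eapply (Green_integral_bound (A1 x) (B1 x) (fun t => t ^ 2 * (1 - x) ^ 2 / 2) (B1 x));
    eauto using U1_Green; try lra.
  - intros t Ht. unfold A1. apply Rabs_le.
    assert (0 <= t ^ 2 * (1 - x)) by (apply Rmult_le_pos; [apply pow2_ge_0 | lra]).
    assert (0 <= t ^ 2 * (1 - x) * (2 * x * (1 - t))) by (apply Rmult_le_pos; nra).
    assert (0 <= t ^ 2 * (1 - x) * (2 * (1 - 2 * x) + 2 * t * x)) by (apply Rmult_le_pos; nra).
    split; nra.
  - intros t Ht. rewrite Rabs_pos_eq; [lra |]. unfold B1.
    assert (0 <= x * (1 - t) ^ 2) by (apply Rmult_le_pos; [lra | apply pow2_ge_0]).
    assert (0 <= 2 * (t - x) * (1 - x) + x * (1 - 2 * x)) by nra.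
    nra.
  - apply (is_RInt_antiderivative (fun t => t ^ 3 * (1 - x) ^ 2 / 6));
      intros t; auto_derive; auto; field.
  - apply (is_RInt_antiderivative
      (fun t => - x / 2 * ((2 - 3 * x) * (1 - t) ^ 3 / 3 - (2 - 2 * x) * (1 - t) ^ 4 / 4)));
      intros t; unfold B1; auto_derive; auto; field.
  - pose proof (U1_kernel_mass_le x Hx).
    match goal with |- ?s <= _ =>
      replace s with (x * (1 - x) * (1 - 2 * x + x ^ 3 * (4 - 3 * x)) / 12) by field end.
    lra.
Qed.

Lemma U1_bound_right x : 1 / 2 <= x <= 1 -> Rabs (U1 phi x) <= d / 64.
Proof.
  intros Hx. replace (d / 64) with (/ 64 * d) by field.
  eapply (Green_integral_bound (A1 x) (B1 x) (fun t => - A1 x t)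
            (fun t => x ^ 2 * (1 - t) ^ 2 / 2));
    eauto using U1_Green; try lra.
  - intros t Ht. unfold A1.
    assert (0 <= t ^ 2 * (1 - x)) by (apply Rmult_le_pos; [apply pow2_ge_0 | lra]).
    assert (0 <= t ^ 2 * (1 - x) * (2 * x * (x - t) + (2 * x - 1) * (1 - x)))
      by (apply Rmult_le_pos; nra).
    rewrite Rabs_left1; lra.
  - intros t Ht. unfold B1. apply Rabs_le.
    assert (0 <= x * (1 - t) ^ 2) by (apply Rmult_le_pos; [lra | apply pow2_ge_0]).
    assert (0 <= x * (1 - t) ^ 2 * (2 * (2 * x - 1) + 2 * (1 - t) * (1 - x)))
      by (apply Rmult_le_pos; nra).
    assert (0 <= x * (1 - t) ^ 2 * (2 * t * (1 - x))) by (apply Rmult_le_pos; nra).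
    split; nra.
  - apply (is_RInt_antiderivative
      (fun t => (1 - x) / 2 * ((3 * x - 1) * t ^ 3 / 3 - x * t ^ 4 / 2)));
      intros t; unfold A1; auto_derive; auto; field.
  - apply (is_RInt_antiderivative (fun t => - x ^ 2 * (1 - t) ^ 3 / 6));
      intros t; auto_derive; auto; field.
  - pose proof (U1_kernel_mass_le (1 - x) ltac:(lra)).
    match goal with |- ?s <= _ =>
      replace s with
        ((1 - x) * (1 - (1 - x)) * (1 - 2 * (1 - x) + (1 - x) ^ 3 * (4 - 3 * (1 - x))) / 12)
        by field end.
    lra.
Qed.

Lemma U1_bound x : 0 <= x <= 1 -> Rabs (U1 phi x) <= d / 64.
Proof.
  intros Hx. destruct (Rle_lt_dec x (1 / 2)).
  - apply U1_bound_left; lra.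
  - apply U1_bound_right; lra.
Qed.

Lemma U2_bound x : 0 <= x <= 1 -> Rabs (U2 phi x) <= 2 * d.
Proof.
  intros Hx.
  eapply (Green_integral_bound (A2 x) (B2 x) (fun _ => 2) (fun _ => 2)); eauto using U2_Green.
  - intros t Ht. unfold A2. apply Rabs_le.
    assert (0 <= x * (3 - 2 * t)) by (apply Rmult_le_pos; lra).
    assert (0 <= (1 - x) * (3 - 2 * t)) by (apply Rmult_le_pos; lra).
    assert (0 <= t ^ 2 * (3 * x - 2 * t * x + t)) by (apply Rmult_le_pos; nra).
    assert (0 <= t ^ 2 * (3 - 3 * x + 2 * t * x - t)) by (apply Rmult_le_pos; nra).
    split; nra.
  - intros t Ht. unfold B2. apply Rabs_le.
    assert (0 <= (1 - x) * t) by (apply Rmult_le_pos; lra).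
    assert (0 <= x * t) by (apply Rmult_le_pos; lra).
    assert (0 <= (1 - t) ^ 2 * (t - x - 2 * x * t + 2)) by (apply Rmult_le_pos; nra).
    assert (0 <= (1 - t) ^ 2 * (1 - t + x + 2 * x * t)) by (apply Rmult_le_pos; nra).
    assert (0 <= t * (2 - t)) by (apply Rmult_le_pos; lra).
    split; nra.
  - apply (is_RInt_antiderivative (fun t => 2 * t)); intros t; auto_derive; auto; ring.
  - apply (is_RInt_antiderivative (fun t => 2 * t)); intros t; auto_derive; auto; ring.
  - lra.
Qed.

Lemma U3_bound x : 0 <= x <= 1 -> Rabs (U3 phi x) <= d.
Proof.
  intros Hx. rewrite <- (Rmult_1_l d).
  eapply (Green_integral_bound (A3 x) (B3 x) (fun _ => 1) (fun _ => 1)); eauto using U3_Green.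
  - intros t Ht. unfold A3. apply Rabs_le.
    assert (0 <= t ^ 2 * (3 - 2 * t)) by (apply Rmult_le_pos; nra).
    assert (0 <= (1 - t) ^ 2 * (1 + 2 * t)) by (apply Rmult_le_pos; nra).
    split; nra.
  - intros t Ht. unfold B3. apply Rabs_le.
    assert (0 <= t ^ 2 * (3 - 2 * t)) by (apply Rmult_le_pos; nra).
    assert (0 <= (1 - t) ^ 2 * (1 + 2 * t)) by (apply Rmult_le_pos; nra).
    split; nra.
  - apply (is_RInt_antiderivative (fun t => t)); intros t; auto_derive; auto; ring.
  - apply (is_RInt_antiderivative (fun t => t)); intros t; auto_derive; auto; ring.
  - lra.
Qed.

End Green.

(** * The contraction principle for the sup distance *)

Lemma geometric_small (L c eps : R) : 0 <= L < 1 -> 0 < eps -> exists n, c * L ^ n <= eps.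
Proof.
  intros HL Heps. destruct (Rle_lt_dec c 0) as [Hc | Hc].
  - exists O. simpl. lra.
  - destruct (pow_lt_1_zero L ltac:(rewrite Rabs_pos_eq; lra) (eps / c)) as [N HN];
      [apply Rdiv_lt_0_compat; auto |].
    exists N. specialize (HN N (le_n N)). rewrite Rabs_pos_eq in HN by (apply pow_le; lra).
    replace eps with (c * (eps / c)) by (field; lra).
    apply Rmult_le_compat_l; lra.
Qed.

Lemma eq_0_of_geometric_bound (a c L : R) : 0 <= L < 1 ->
  (forall n, Rabs a <= c * L ^ n) -> a = 0.
Proof.
  intros HL Ha. apply Rabs_eq_0, Rle_antisym; [| apply Rabs_pos].
  apply le_epsilon. intros eps Heps.
  destruct (geometric_small L c eps HL Heps) as [n Hn]. specialize (Ha n). lra.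
Qed.

Lemma uniform_Cauchy_limit (g : nat -> R -> R) (E : nat -> R) :
  (forall n p t, Rabs (g (n + p)%nat t - g n t) <= E n) ->
  (forall eps, 0 < eps -> exists n, E n <= eps) ->
  exists h, forall n t, Rabs (h t - g n t) <= E n.
Proof.
  intros Htail Hsmall.
  assert (Hlim : forall t, {l | Un_cv (fun n => g n t) l}).
  { intros t. apply Rcomplete.R_complete. intros eps Heps.
    destruct (Hsmall (eps / 3) ltac:(lra)) as [N HN].
    exists N. intros n p Hn Hp.
    pose proof (Htail N (n - N)%nat t) as Hn'. pose proof (Htail N (p - N)%nat t) as Hp'.
    replace (N + (n - N))%nat with n in Hn' by lia.
    replace (N + (p - N))%nat with p in Hp' by lia.
    pose proof (R_dist_tri (g n t) (g p t) (g N t)) as Htri.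
    rewrite (R_dist_sym (g N t)) in Htri. unfold R_dist in *. lra. }
  exists (fun t => proj1_sig (Hlim t)). intros n t.
  destruct (Hlim t) as [l Hl]; simpl.
  apply le_epsilon. intros eps Heps. destruct (Hl eps Heps) as [N HN].
  specialize (HN (n + N)%nat ltac:(lia)). pose proof (Htail n N t).
  pose proof (R_dist_tri l (g n t) (g (n + N)%nat t)) as Htri.
  rewrite (R_dist_sym l (g (n + N)%nat t)) in Htri. unfold R_dist in *. lra.
Qed.

Section Contraction.

Variable P : (R -> R) -> Prop.
Variable T : (R -> R) -> R -> R.
Variables L D : R.
Hypothesis L_range : 0 <= L < 1.
Hypothesis T_stable : forall phi, P phi -> P (T phi).
Hypothesis P_diameter : forall phi psi t, P phi -> P psi -> Rabs (phi t - psi t) <= D.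
Hypothesis T_contraction : forall phi psi d, P phi -> P psi ->
  (forall t, Rabs (phi t - psi t) <= d) -> forall t, Rabs (T phi t - T psi t) <= L * d.
Hypothesis P_closed : forall h,
  (forall eps, 0 < eps -> exists phi, P phi /\ forall t, Rabs (h t - phi t) <= eps) -> P h.

Lemma contraction_fixed_point_unique phi psi :
  P phi -> P psi -> (forall t, T phi t = phi t) -> (forall t, T psi t = psi t) ->
  forall t, phi t = psi t.
Proof.
  intros Hphi Hpsi Tphi Tpsi t.
  assert (Hn : forall n t, Rabs (phi t - psi t) <= D * L ^ n).
  { induction n as [| n IH]; intros s.
    - simpl. rewrite Rmult_1_r. auto.
    - rewrite <- Tphi, <- Tpsi. simpl.
      replace (D * (L * L ^ n)) with (L * (D * L ^ n)) by ring. auto. }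
  apply Rminus_diag_uniq, (eq_0_of_geometric_bound _ D L); auto.
Qed.

Lemma iterates_Cauchy phi0 : P phi0 -> forall n p t,
  Rabs (Nat.iter (n + p) T phi0 t - Nat.iter n T phi0 t) <= D / (1 - L) * L ^ n.
Proof.
  intros Hphi0. set (g n := Nat.iter n T phi0).
  assert (Hg : forall n, P (g n)) by (induction n; simpl; auto).
  assert (HD : 0 <= D).
  { pose proof (P_diameter phi0 phi0 0 Hphi0 Hphi0). pose proof (Rabs_pos (phi0 0 - phi0 0)).
    lra. }
  assert (Hstep : forall n t, Rabs (g (S n) t - g n t) <= D * L ^ n).
  { induction n as [| n IH]; intros t.
    - simpl. rewrite Rmult_1_r. auto.
    - replace (D * L ^ S n) with (L * (D * L ^ n)) by (simpl; ring).
      apply (T_contraction (g (S n)) (g n)); auto. }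
  intros n p t. enough (Rabs (g (n + p)%nat t - g n t) <= D * (L ^ n - L ^ (n + p)) / (1 - L)).
  { eapply Rle_trans; [eassumption |].
    assert (0 <= D * L ^ (n + p)) by (apply Rmult_le_pos; [| apply pow_le]; lra).
    apply (Rmult_le_reg_r (1 - L)); [lra |]. field_simplify; lra. }
  induction p as [| p IH].
  - rewrite Nat.add_0_r, !Rminus_eq_0, Rabs_R0. lra.
  - replace (n + S p)%nat with (S (n + p)) by lia.
    pose proof (R_dist_tri (g (S (n + p)) t) (g n t) (g (n + p)%nat t)).
    pose proof (Hstep (n + p)%nat t). unfold R_dist in *.
    replace (D * (L ^ n - L ^ S (n + p)) / (1 - L))
      with (D * L ^ (n + p) + D * (L ^ n - L ^ (n + p)) / (1 - L)) by (simpl; field; lra).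
    lra.
Qed.

Lemma contraction_fixed_point_exists phi0 :
  P phi0 -> exists h, P h /\ forall t, T h t = h t.
Proof.
  intros Hphi0. set (g n := Nat.iter n T phi0). set (E n := D / (1 - L) * L ^ n).
  assert (Hg : forall n, P (g n)) by (induction n; simpl; auto).
  destruct (uniform_Cauchy_limit g E (iterates_Cauchy phi0 Hphi0)) as [h Hh];
    [intros eps Heps; apply geometric_small; auto |].
  assert (HPh : P h).
  { apply P_closed. intros eps Heps.
    destruct (geometric_small L (D / (1 - L)) eps) as [n Hn]; auto.
    exists (g n). split; auto. intros t. eapply Rle_trans; [apply Hh | exact Hn]. }
  exists h. split; auto. intros t.
  apply Rminus_diag_uniq, (eq_0_of_geometric_bound _ (2 * L * D / (1 - L)) L); auto.
  intros n.
  assert (Hc : Rabs (T h t - g (S n) t) <= L * E n) by (apply T_contraction; auto).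
  pose proof (Hh (S n) t).
  pose proof (R_dist_tri (T h t) (h t) (g (S n) t)) as Htri.
  rewrite (R_dist_sym (g (S n) t) (h t)) in Htri. unfold R_dist, E in *.
  replace (2 * L * D / (1 - L) * L ^ n) with (L * (D / (1 - L) * L ^ n) + D / (1 - L) * L ^ S n)
    by (simpl; field; lra).
  lra.
Qed.

End Contraction.

(** * The fixed-point formulation *)

Lemma sqrt3_bound : 72 * sqrt 3 <= 128.
Proof.
  assert (sqrt 3 <= 16 / 9); [| lra].
  rewrite <- (sqrt_pow2 (16 / 9)) by lra. apply sqrt_le_1_alt. lra.
Qed.

Lemma Rdiv_128_le_72_sqrt3 (K : R) : 0 <= K -> K / 128 <= K / (72 * sqrt 3).
Proof.
  intros HK. pose proof sqrt3_bound. assert (0 < sqrt 3) by (apply sqrt_lt_R0; lra).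
  apply Rmult_le_compat_l; [lra |]. apply Rinv_le_contravar; lra.
Qed.

(* f is only continuous for x in [0,1]; clamping makes the superposition a
   continuous function on all of R. *)
Definition nemytskii (f : R -> R -> R -> R -> R -> R) (w w1 w2 w3 : R -> R) (x : R) : R :=
  f (clamp01 x) (w (clamp01 x)) (w1 (clamp01 x)) (w2 (clamp01 x)) (w3 (clamp01 x)).

Definition T_op (f : R -> R -> R -> R -> R -> R) (phi : R -> R) : R -> R :=
  nemytskii f (U0 phi) (U1 phi) (U2 phi) (U3 phi).

Definition bounded_continuous (m : R) (phi : R -> R) : Prop :=
  (forall x, continuous phi x) /\ forall t, Rabs (phi t) <= m.

Lemma continuous_nemytskii f w w1 w2 w3 : cont_f f ->
  (forall x, I01 x -> cont_I01 w x /\ cont_I01 w1 x /\ cont_I01 w2 x /\ cont_I01 w3 x) ->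
  forall x, continuous (nemytskii f w w1 w2 w3) x.
Proof.
  intros Hf Hw x. apply continuous_epsilon_delta. intros eps Heps.
  set (y := clamp01 x). assert (Hy : I01 y) by apply clamp01_I01.
  destruct (Hf y (w y) (w1 y) (w2 y) (w3 y) Hy eps Heps) as [d [Hd Hfd]].
  destruct (Hw y Hy) as (C0 & C1 & C2 & C3).
  destruct (C0 d Hd) as [d0 [Hd0 K0]]. destruct (C1 d Hd) as [d1 [Hd1 K1]].
  destruct (C2 d Hd) as [d2 [Hd2 K2]]. destruct (C3 d Hd) as [d3 [Hd3 K3]].
  set (delta := Rmin d (Rmin (Rmin d0 d1) (Rmin d2 d3))).
  assert (Hdelta : delta <= d /\ delta <= d0 /\ delta <= d1 /\ delta <= d2 /\ delta <= d3).
  { unfold delta. pose proof (Rmin_l d0 d1). pose proof (Rmin_r d0 d1).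
    pose proof (Rmin_l d2 d3). pose proof (Rmin_r d2 d3).
    pose proof (Rmin_l (Rmin d0 d1) (Rmin d2 d3)). pose proof (Rmin_r (Rmin d0 d1) (Rmin d2 d3)).
    pose proof (Rmin_l d (Rmin (Rmin d0 d1) (Rmin d2 d3))).
    pose proof (Rmin_r d (Rmin (Rmin d0 d1) (Rmin d2 d3))). lra. }
  exists delta. split; [repeat apply Rmin_pos; auto |].
  intros z Hz. pose proof (clamp01_dist x z) as Hc. pose proof (clamp01_I01 z).
  fold y in Hc. unfold nemytskii. fold y.
  apply Hfd; [auto | lra | apply K0 | apply K1 | apply K2 | apply K3]; auto; lra.
Qed.

Lemma U_in_DM M phi x : 0 < M -> (forall t, continuous phi t) ->
  (forall t, 0 <= t <= 1 -> Rabs (phi t) <= M / 2) -> I01 x ->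
  DM M x (U0 phi x) (U1 phi x) (U2 phi x) (U3 phi x).
Proof.
  intros HM Hc Hb Hx.
  pose proof (U0_bound phi Hc _ Hb x Hx). pose proof (U1_bound phi Hc _ Hb x Hx).
  pose proof (U2_bound phi Hc _ Hb x Hx). pose proof (U3_bound phi Hc _ Hb x Hx).
  pose proof (Rdiv_128_le_72_sqrt3 M ltac:(lra)).
  repeat split; try apply Hx; lra.
Qed.

Lemma bounded_continuous_closed m h :
  (forall eps, 0 < eps ->
     exists phi, bounded_continuous m phi /\ forall t, Rabs (h t - phi t) <= eps) ->
  bounded_continuous m h.
Proof.
  intros Happrox. split.
  - intros x. apply continuous_epsilon_delta. intros eps Heps.
    destruct (Happrox (eps / 3) ltac:(lra)) as [phi [[Hc _] Hphi]].
    destruct (proj1 (continuous_epsilon_delta phi x) (Hc x) (eps / 3) ltac:(lra))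
      as [delta [Hdelta0 Hdelta]].
    exists delta. split; auto. intros y Hy. specialize (Hdelta y Hy).
    pose proof (Hphi x). pose proof (Hphi y).
    pose proof (R_dist_tri (h y) (h x) (phi y)). pose proof (R_dist_tri (phi y) (h x) (phi x)).
    rewrite (R_dist_sym (phi x) (h x)) in *. unfold R_dist in *. lra.
  - intros t. apply le_epsilon. intros eps Heps.
    destruct (Happrox eps Heps) as [phi [[_ Hb] Hphi]].
    pose proof (Rabs_triang_inv (h t) (phi t)). specialize (Hb t). specialize (Hphi t). lra.
Qed.

Lemma bounded_continuous_dist m phi psi t :
  bounded_continuous m phi -> bounded_continuous m psi -> Rabs (phi t - psi t) <= 2 * m.
Proof.
  intros [_ Hphi] [_ Hpsi]. pose proof (Rabs_triang (phi t) (- psi t)) as Htri.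
  rewrite Rabs_Ropp in Htri. specialize (Hphi t). specialize (Hpsi t). unfold Rminus. lra.
Qed.

Section Operator.

Variable f : R -> R -> R -> R -> R -> R.
Variable M : R.
Hypothesis M_pos : 0 < M.
Hypothesis f_cont : cont_f f.
Hypothesis f_bound : forall x u y v z, DM M x u y v z -> Rabs (f x u y v z) <= M / 2.

Lemma T_op_bounded_continuous phi :
  bounded_continuous (M / 2) phi -> bounded_continuous (M / 2) (T_op f phi).
Proof.
  intros [Hc Hb]. split.
  - apply continuous_nemytskii; auto. intros x Hx.
    repeat split; apply continuous_cont_I01, (ex_derive_continuous (V := R_NormedModule)); eexists.
    + apply is_derive_U0; auto.
    + apply is_derive_U1; auto.
    + apply is_derive_U2; auto.
    + apply is_derive_U3; auto.
  - intros t. apply f_bound, U_in_DM; auto. apply clamp01_I01.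
Qed.

Variables K1 K2 K3 K4 : R.
Hypotheses (HK1 : 0 <= K1) (HK2 : 0 <= K2) (HK3 : 0 <= K3) (HK4 : 0 <= K4).
Hypothesis f_Lipschitz :
  forall x u1 y1 v1 z1 u2 y2 v2 z2,
    DM M x u1 y1 v1 z1 -> DM M x u2 y2 v2 z2 ->
    Rabs (f x u2 y2 v2 z2 - f x u1 y1 v1 z1) <=
      K1 * Rabs (u2 - u1) + K2 * Rabs (y2 - y1) +
      K3 * Rabs (v2 - v1) + K4 * Rabs (z2 - z1).

Lemma T_op_contraction phi psi d :
  bounded_continuous (M / 2) phi -> bounded_continuous (M / 2) psi ->
  (forall t, Rabs (phi t - psi t) <= d) ->
  forall t, Rabs (T_op f phi t - T_op f psi t) <= (K1 / 384 + K2 / 64 + 2 * K3 + K4) * d.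
Proof.
  intros [Hphi Hphib] [Hpsi Hpsib] Hd t. unfold T_op, nemytskii.
  set (x := clamp01 t). assert (Hx : I01 x) by apply clamp01_I01.
  eapply Rle_trans; [apply f_Lipschitz; apply U_in_DM; auto |].
  assert (Hc : forall s, continuous (fun s => phi s - psi s) s)
    by (intros s; apply (continuous_minus (V := R_NormedModule)); auto).
  assert (Hb : forall s, 0 <= s <= 1 -> Rabs (phi s - psi s) <= d) by auto.
  pose proof (U0_bound _ Hc d Hb x Hx). pose proof (U1_bound _ Hc d Hb x Hx).
  pose proof (U2_bound _ Hc d Hb x Hx). pose proof (U3_bound _ Hc d Hb x Hx).
  rewrite U0_minus, U1_minus, U2_minus, U3_minus in * by auto.
  assert (K1 * Rabs (U0 phi x - U0 psi x) <= K1 * (d / 384)) by (apply Rmult_le_compat_l; auto).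
  assert (K2 * Rabs (U1 phi x - U1 psi x) <= K2 * (d / 64)) by (apply Rmult_le_compat_l; auto).
  assert (K3 * Rabs (U2 phi x - U2 psi x) <= K3 * (2 * d)) by (apply Rmult_le_compat_l; auto).
  assert (K4 * Rabs (U3 phi x - U3 psi x) <= K4 * d) by (apply Rmult_le_compat_l; auto).
  lra.
Qed.

End Operator.

Lemma fixed_point_is_solution f phi : (forall t, continuous phi t) ->
  (forall t, T_op f phi t = phi t) -> is_solution f (U0 phi) (U1 phi) (U2 phi) (U3 phi) phi.
Proof.
  intros Hc Hfix. split; [| split; [| repeat split]].
  - intros x _. repeat split; [apply is_derive_has_deriv_I01 .. | apply continuous_cont_I01; auto].
    + apply is_derive_U0; auto.
    + apply is_derive_U1; auto.
    + apply is_derive_U2; auto.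
    + apply is_derive_U3; auto.
  - intros x Hx. rewrite <- Hfix. unfold T_op, nemytskii.
    rewrite clamp01_id; auto. unfold I01; lra.
  - apply U0_at_0.
  - apply U0_at_1.
  - apply U1_at_0.
  - apply U1_at_1.
Qed.

Lemma fixed_point_sol_bounds M phi : 0 < M -> bounded_continuous (M / 2) phi ->
  sol_bounds M (U0 phi) (U1 phi) (U2 phi) (U3 phi).
Proof.
  intros HM [Hc Hb] x Hx.
  destruct (U_in_DM M phi x HM Hc (fun t _ => Hb t) Hx) as (_ & ? & ? & ? & ?). auto.
Qed.

Section Solutions.

Variable f : R -> R -> R -> R -> R -> R.
Hypothesis f_cont : cont_f f.
Variables w w1 w2 w3 w4 : R -> R.
Hypothesis w_solution : is_solution f w w1 w2 w3 w4.

Local Notation chi := (nemytskii f w w1 w2 w3).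

Lemma continuous_solution_rhs t : continuous chi t.
Proof.
  destruct w_solution as [HC4 _].
  apply continuous_nemytskii; auto. intros x Hx.
  destruct (HC4 x Hx) as (D0 & D1 & D2 & D3 & _).
  repeat split; eapply has_deriv_I01_cont; eassumption.
Qed.

Lemma solution_eq_U x : I01 x ->
  w x = U0 chi x /\ w1 x = U1 chi x /\ w2 x = U2 chi x /\ w3 x = U3 chi x.
Proof.
  destruct w_solution as (HC4 & Hode & Hw0 & Hw1 & Hw10 & Hw11).
  pose proof continuous_solution_rhs as Hchi.
  intros Hx.
  assert (Hz : forall y, I01 y ->
    w y - U0 chi y = 0 /\ w1 y - U1 chi y = 0 /\ w2 y - U2 chi y = 0 /\ w3 y - U3 chi y = 0).
  { apply (clamped_homogeneous_zero (fun t => w t - U0 chi t) (fun t => w1 t - U1 chi t)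
             (fun t => w2 t - U2 chi t) (fun t => w3 t - U3 chi t)).
    - intros y Hy. destruct (HC4 y Hy) as (D0 & D1 & D2 & D3 & _).
      repeat split; [| | | eapply has_deriv_I01_cont];
        apply has_deriv_I01_minus; try eassumption; apply is_derive_has_deriv_I01.
      + apply is_derive_U0; auto.
      + apply is_derive_U1; auto.
      + apply is_derive_U2; auto.
      + apply is_derive_U3; auto.
    - intros y Hy. assert (Iy : I01 y) by (unfold I01; lra).
      replace 0 with (w4 y - chi y)
        by (rewrite (Hode y Hy); unfold nemytskii; rewrite clamp01_id; auto; ring).
      apply has_deriv_I01_minus; [apply HC4; auto |].
      apply is_derive_has_deriv_I01, is_derive_U3; auto.
    - rewrite Hw0, U0_at_0. ring.
    - rewrite Hw1, U0_at_1. ring.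
    - rewrite Hw10, U1_at_0. ring.
    - rewrite Hw11, U1_at_1. ring. }
  destruct (Hz x Hx) as (E0 & E1 & E2 & E3). repeat split; lra.
Qed.

Lemma solution_rhs_fixed t : T_op f chi t = chi t.
Proof.
  destruct (solution_eq_U (clamp01 t) (clamp01_I01 t)) as (E0 & E1 & E2 & E3).
  change (T_op f chi t) with
    (f (clamp01 t) (U0 chi (clamp01 t)) (U1 chi (clamp01 t))
       (U2 chi (clamp01 t)) (U3 chi (clamp01 t))).
  rewrite <- E0, <- E1, <- E2, <- E3. reflexivity.
Qed.

Lemma solution_rhs_bounded_continuous M :
  (forall x u y v z, DM M x u y v z -> Rabs (f x u y v z) <= M / 2) ->
  sol_bounds M w w1 w2 w3 -> bounded_continuous (M / 2) chi.
Proof.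
  intros Hfb Hwb. split; [exact continuous_solution_rhs |].
  intros t. pose proof (clamp01_I01 t) as Ht.
  destruct (Hwb (clamp01 t) Ht) as (B0 & B1 & B2 & B3).
  apply Hfb. unfold DM. repeat split; auto; apply Ht.
Qed.

End Solutions.

Theorem theorem1 (f : R -> R -> R -> R -> R -> R) (M K1 K2 K3 K4 : R) :
  cont_f f ->
  0 < M ->
  (forall x u y v z, DM M x u y v z -> Rabs (f x u y v z) <= M / 2) ->
  0 <= K1 -> 0 <= K2 -> 0 <= K3 -> 0 <= K4 ->
  (forall x u1 y1 v1 z1 u2 y2 v2 z2,
     DM M x u1 y1 v1 z1 -> DM M x u2 y2 v2 z2 ->
     Rabs (f x u2 y2 v2 z2 - f x u1 y1 v1 z1) <=
       K1 * Rabs (u2 - u1) + K2 * Rabs (y2 - y1) +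
       K3 * Rabs (v2 - v1) + K4 * Rabs (z2 - z1)) ->
  K1 / 384 + K2 / (72 * sqrt 3) + K3 + K4 < 1 / 2 ->
  exists u u1 u2 u3 u4 : R -> R,
    is_solution f u u1 u2 u3 u4 /\ sol_bounds M u u1 u2 u3 /\
    (forall w w1 w2 w3 w4 : R -> R,
       is_solution f w w1 w2 w3 w4 -> sol_bounds M w w1 w2 w3 ->
       forall x, I01 x -> w x = u x).
Proof.
  intros Hf HM Hfb HK1 HK2 HK3 HK4 HLip Hq.
  set (L := K1 / 384 + K2 / 64 + 2 * K3 + K4).
  assert (HL : 0 <= L < 1) by (pose proof (Rdiv_128_le_72_sqrt3 K2 HK2); unfold L; lra).
  pose proof (bounded_continuous_dist (M / 2)) as Hdiam.
  pose proof (T_op_contraction f M HM K1 K2 K3 K4 HK1 HK2 HK3 HK4 HLip) as Hcontr.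
  destruct (contraction_fixed_point_exists _ (T_op f) L (2 * (M / 2)) HL
              (T_op_bounded_continuous f M HM Hf Hfb) Hdiam Hcontr
              (bounded_continuous_closed (M / 2)) (fun _ => 0)) as [phi [Hphi Tphi]].
  { split; [intros x; apply continuous_const | intros t; rewrite Rabs_R0; lra]. }
  exists (U0 phi), (U1 phi), (U2 phi), (U3 phi), phi. split; [| split].
  - apply fixed_point_is_solution; [apply Hphi | exact Tphi].
  - apply fixed_point_sol_bounds; auto.
  - intros w w1 w2 w3 w4 Hw Hwb x Hx.
    rewrite (proj1 (solution_eq_U f Hf w w1 w2 w3 w4 Hw x Hx)).
    replace (nemytskii f w w1 w2 w3) with phi; [reflexivity |].
    apply functional_extensionality. intros t.
    apply (contraction_fixed_point_unique _ (T_op f) L (2 * (M / 2)) HL Hdiam Hcontr); auto.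
    + exact (solution_rhs_bounded_continuous f Hf w w1 w2 w3 w4 Hw M Hfb Hwb).
    + exact (solution_rhs_fixed f Hf w w1 w2 w3 w4 Hw).
Qed.
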